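(* Let $((A_i,B_i))_{i\in\mathbb N}$ be a strictly increasing sequence of oriented separations of a connected locally finite graph $G$ whose underlying separations are tight, let $(A,B)=(\bigcup_iA_i,\bigcap_iB_i)$ be its limit, and let $(C,D)$ be an oriented separation of $G$ of finite order. If the sequence is non-exhaustive (i.e. $B\neq\emptyset$) and $(C,D)\le(A,B)$, then there is $I\in\mathbb N$ with $(C,D)\le(A_i,B_i)$ for all $i\ge I$.
   Context: A separation of $G$ is an unordered pair $\{A,B\}$ of subsets of $V(G)$ with $A\cup B=V(G)$ and no edge between $A\setminus B$ and $B\setminus A$; its order is $|A\cap B|$. Oriented separations are ordered by $(A,B)\le(C,D)$ iff $A\subseteq C$ and $B\supseteq D$. For $X\subseteq V(G)$, a component $K$ of $G-X$ is tight if $N_G(K)=X$; a separation $\{A,B\}$ is tight if both $A\setminus B$ and $B\setminus A$ contain the vertex set of a tight component of $G-(A\cap B)$. *)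

From Stdlib Require Import List Arith.

Definition vset (V : Type) := V -> Prop.

Section Graphs.
Variable V : Type.
Variable adj : V -> V -> Prop.

Definition simple_graph : Prop :=
  (forall x y, adj x y -> adj y x) /\ (forall x, ~ adj x x).

Definition finite_set (S : vset V) : Prop :=
  exists l : list V, forall x, S x -> In x l.

Definition locally_finite : Prop :=
  forall v, finite_set (fun w => adj v w).

Inductive reach_in (S : vset V) (x : V) : V -> Prop :=
| reach_refl : S x -> reach_in S x x
| reach_step : forall y z, reach_in S x y -> adj y z -> S z -> reach_in S x z.

Definition connected_graph : Prop :=
  forall x y, reach_in (fun _ => True) x y.

Definition subset (S T : vset V) : Prop := forall x, S x -> T x.
Definition set_eq (S T : vset V) : Prop := forall x, S x <-> T x.

Definition is_separation (A B : vset V) : Prop :=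
  (forall x, A x \/ B x) /\
  (forall x y, A x -> ~ B x -> B y -> ~ A y -> ~ adj x y).

Definition sep_order_finite (A B : vset V) : Prop :=
  finite_set (fun x => A x /\ B x).

Definition sep_le (A B C D : vset V) : Prop := subset A C /\ subset D B.

Definition sep_lt (A B C D : vset V) : Prop :=
  sep_le A B C D /\ ~ (set_eq A C /\ set_eq B D).

Definition component_of (X K : vset V) : Prop :=
  exists v, ~ X v /\ set_eq K (reach_in (fun y => ~ X y) v).

Definition nbhd (K : vset V) : vset V :=
  fun y => ~ K y /\ exists x, K x /\ adj x y.

Definition tight_component (X K : vset V) : Prop :=
  component_of X K /\ set_eq (nbhd K) X.

Definition tight_sep (A B : vset V) : Prop :=
  let X := fun x => A x /\ B x in
  (exists K, tight_component X K /\ subset K (fun x => A x /\ ~ B x)) /\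
  (exists K, tight_component X K /\ subset K (fun x => B x /\ ~ A x)).

End Graphs.

Arguments finite_set {V}.
Arguments subset {V}.
Arguments set_eq {V}.

(* Let Y = C ∩ D be the finite separator of (C,D).  By local
   finiteness the vertices of C lying in Y or adjacent to Y form a finite set;
   they all lie in A = ⋃ A_i, so a single index I has all of them in A_I.  We
   show (C,D) ≤ (A_I,B_I), and monotonicity of the chain gives the claim for
   every i ≥ I.

   For the key step write (P,Q) = (A_I,B_I) and X = P ∩ Q.  Tightness gives a
   component K of G - X with N(K) = X and K ⊆ Q \ P.  As K is connected and
   misses Y, it lies in C \ D or in D \ C.  The first case is impossible: then
   X ⊆ C \ D, and the set (Q \ P) ∩ (D \ C) has no outgoing edge, contains a
   vertex b of B, hence is everything, yet misses K.  In the second case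
   X ⊆ D, and (C \ D) \ P likewise has no outgoing edge while missing b, so it
   is empty; this yields C ⊆ P and then Q ⊆ D. *)
From Stdlib Require Import List Arith Classical Lia.

Section Separations.
Variable V : Type.
Variable adj : V -> V -> Prop.
Hypothesis adj_sym : forall x y, adj x y -> adj y x.

Lemma sep_le_trans (A B C D E F : vset V) :
  sep_le V A B C D -> sep_le V C D E F -> sep_le V A B E F.
Proof.
  intros [HAC HDB] [HCE HFD]. split; intros x Hx; auto.
Qed.

Lemma increasing_chain_monotone (As Bs : nat -> vset V) :
  (forall i j, i < j -> sep_lt V (As i) (Bs i) (As j) (Bs j)) ->
  forall i j, i <= j -> sep_le V (As i) (Bs i) (As j) (Bs j).
Proof.
  intros Hincr i j Hij. destruct (Nat.eq_dec i j) as [<- | Hne].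
  - split; intros x Hx; exact Hx.
  - apply Hincr; lia.
Qed.

Lemma separation_swap (P Q : vset V) :
  is_separation V adj P Q -> is_separation V adj Q P.
Proof.
  intros [Hcov Hedge]. split.
  - intros x. destruct (Hcov x); auto.
  - intros x y Qx Px Py Qy Hxy. apply (Hedge y x); auto.
Qed.

Lemma separation_nbr_side (P Q : vset V) (y z : V) :
  is_separation V adj P Q -> P y -> ~ Q y -> adj y z -> P z.
Proof.
  intros [Hcov Hedge] Py Qy Hyz. apply NNPP; intro Pz.
  destruct (Hcov z) as [Pz' | Qz]; [contradiction |].
  apply (Hedge y z); auto.
Qed.

Lemma nbhd_in_side (P Q K : vset V) :
  is_separation V adj P Q -> subset K (fun x => P x /\ ~ Q x) ->
  subset (nbhd V adj K) P.
Proof.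
  intros HPQ HK x [_ [u [Ku Hux]]]. destruct (HK u Ku) as [Pu Qu].
  eapply separation_nbr_side; eauto.
Qed.

Lemma reach_preserved (S W : vset V) (x : V) :
  W x ->
  (forall y z, reach_in V adj S x y -> W y -> adj y z -> S z -> W z) ->
  forall z, reach_in V adj S x z -> W z.
Proof.
  intros Wx Hstep z Hz.
  induction Hz as [_ | y z Hy IH Hyz Sz]; [exact Wx |].
  apply (Hstep y z); auto.
Qed.

Lemma connected_closed_set (W : vset V) (x : V) :
  connected_graph V adj -> W x -> (forall y z, W y -> adj y z -> W z) ->
  forall z, W z.
Proof.
  intros Hconn Wx Hcl z.
  apply (reach_preserved (fun _ => True) W x Wx); [eauto | apply Hconn].
Qed.

Lemma component_within_side (X K P Q : vset V) (v : V) :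
  is_separation V adj P Q -> set_eq K (reach_in V adj (fun y => ~ X y) v) ->
  (forall x, K x -> ~ (P x /\ Q x)) -> P v -> ~ Q v ->
  subset K (fun x => P x /\ ~ Q x).
Proof.
  intros HPQ HK Hdisj Pv Qv x Kx. apply HK in Kx. revert x Kx.
  apply reach_preserved; [auto |].
  intros y z Hy [Py Qy] Hyz Xz.
  assert (Kz : K z) by (apply HK; econstructor 2; eauto).
  assert (Pz : P z) by (eapply separation_nbr_side; eauto).
  split; [exact Pz | intro Qz; apply (Hdisj z Kz); auto].
Qed.

Lemma component_one_side (X K P Q : vset V) :
  is_separation V adj P Q -> component_of V adj X K ->
  (forall x, K x -> ~ (P x /\ Q x)) ->
  subset K (fun x => P x /\ ~ Q x) \/ subset K (fun x => Q x /\ ~ P x).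
Proof.
  intros HPQ [v [Xv HK]] Hdisj.
  assert (Kv : K v) by (apply HK; constructor; exact Xv).
  destruct (classic (Q v)) as [Qv | Qv].
  - right. apply (component_within_side X K Q P v (separation_swap P Q HPQ) HK);
      [intros x Kx [Qx Px]; apply (Hdisj x Kx); auto | exact Qv |].
    intro Pv. apply (Hdisj v Kv); auto.
  - left. apply (component_within_side X K P Q v HPQ HK Hdisj); [| exact Qv].
    destruct HPQ as [Hcov _]. destruct (Hcov v); tauto.
Qed.

Definition closed_nbhd (Y : vset V) : vset V :=
  fun v => Y v \/ exists y, Y y /\ adj y v.

Lemma neighbours_of_list_finite :
  locally_finite V adj ->
  forall l : list V, exists L, forall y w, In y l -> adj y w -> In w L.
Proof.
  intros Hlf l. induction l as [| a l [L HL]].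
  - exists nil. intros y w [].
  - destruct (Hlf a) as [La HLa]. exists (La ++ L).
    intros y w [<- | Hy] Hyw; apply in_or_app; [left | right]; eauto.
Qed.

Lemma closed_nbhd_finite (Y : vset V) :
  locally_finite V adj -> finite_set Y -> finite_set (closed_nbhd Y).
Proof.
  intros Hlf [l Hl].
  destruct (neighbours_of_list_finite Hlf l) as [L HL].
  exists (l ++ L). intros v [Yv | [y [Yy Hyv]]]; apply in_or_app; eauto.
Qed.

Lemma finite_eventually_covered (As : nat -> vset V) (F : vset V) :
  (forall i j, i <= j -> subset (As i) (As j)) ->
  finite_set F -> subset F (fun x => exists i, As i x) ->
  exists I, subset F (As I).
Proof.
  intros Hmono [l Hl] HF.
  assert (Hlist : forall l', exists I, forall v, In v l' -> F v -> As I v).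
  { intros l'. induction l' as [| a l' [I0 HI0]].
    - exists 0. intros v [].
    - destruct (classic (F a)) as [Fa | Fa].
      + destruct (HF a Fa) as [i Hi]. exists (Nat.max I0 i).
        intros v [<- | Hv] Fv; [apply (Hmono i) | apply (Hmono I0)]; auto; lia.
      + exists I0. intros v [<- | Hv] Fv; [contradiction | auto]. }
  destruct (Hlist l) as [I HI]. exists I. intros v Fv. apply HI; auto.
Qed.

Section TightSide.
Variables P Q C D : vset V.
Hypothesis Hconn : connected_graph V adj.
Hypothesis HPQ : is_separation V adj P Q.
Hypothesis HCD : is_separation V adj C D.
Hypothesis HnearP : forall v, C v -> closed_nbhd (fun x => C x /\ D x) v -> P v.
Variable b : V.
Hypothesis Qb : Q b.
Hypothesis Db : D b.

Lemma separator_in_P (x : V) : C x -> D x -> P x.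
Proof. intros Cx Dx. apply HnearP; [exact Cx | left; auto]. Qed.

Lemma tight_component_not_in_C (K : vset V) (v0 : V) :
  set_eq (nbhd V adj K) (fun x => P x /\ Q x) ->
  subset K (fun x => Q x /\ ~ P x) -> subset K (fun x => C x /\ ~ D x) ->
  K v0 -> False.
Proof.
  intros HN HKQ HKC Kv0.
  (* X = N(K) lies in C, but cannot meet D: a vertex of X ∩ D is in the
     separator and adjacent to K, which would put a vertex of K into P. *)
  assert (HXC : forall x, P x -> Q x -> C x)
    by (intros x Px Qx; apply (nbhd_in_side C D K HCD HKC), HN; auto).
  assert (HXD : forall x, P x -> Q x -> ~ D x).
  { intros x Px Qx Dx. destruct (proj2 (HN x) (conj Px Qx)) as [_ [u [Ku Hux]]].
    destruct (HKC u Ku) as [Cu _]. apply (proj2 (HKQ u Ku)), HnearP; [exact Cu |].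
    right. exists x. split; [split; auto | apply adj_sym; exact Hux]. }
  set (W := fun z => (Q z /\ ~ P z) /\ (D z /\ ~ C z)).
  assert (Wclosed : forall y z, W y -> adj y z -> W z).
  { intros y z [[Qy Py] [Dy Cy]] Hyz.
    assert (Qz : Q z) by (eapply separation_nbr_side; eauto using separation_swap).
    assert (Dz : D z) by (eapply separation_nbr_side; eauto using separation_swap).
    assert (Pz : ~ P z) by (intro Pz; apply (HXD z); auto).
    split; split; auto. intro Cz. apply Pz, separator_in_P; auto. }
  assert (Wb : W b).
  { assert (Pb : ~ P b) by (intro Pb; apply (HXD b); auto).
    split; split; auto. intro Cb. apply Pb, separator_in_P; auto. }
  destruct (connected_closed_set W b Hconn Wb Wclosed v0) as [_ [_ Cv0]].
  apply Cv0, HKC, Kv0.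
Qed.

Lemma tight_component_in_D_forces_le (K : vset V) :
  set_eq (nbhd V adj K) (fun x => P x /\ Q x) ->
  subset K (fun x => D x /\ ~ C x) -> sep_le V C D P Q.
Proof.
  intros HN HKD.
  assert (HXD : forall x, P x -> Q x -> D x)
    by (intros x Px Qx;
        apply (nbhd_in_side D C K (separation_swap C D HCD) HKD), HN; auto).
  (* (C \ D) \ P has no outgoing edge and misses b, so it is empty. *)
  set (W := fun z => (C z /\ ~ D z) /\ ~ P z).
  assert (Wclosed : forall y z, W y -> adj y z -> W z).
  { intros y z [[Cy Dy] Py] Hyz.
    assert (Cz : C z) by (eapply separation_nbr_side; eauto).
    assert (Dz : ~ D z).
    { intro Dz. apply Py, HnearP; [exact Cy |].
      right. exists z. split; [split; auto | apply adj_sym; exact Hyz]. }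
    assert (Qy : Q y) by (destruct HPQ as [Hcov _]; destruct (Hcov y); tauto).
    assert (Qz : Q z) by (eapply separation_nbr_side; eauto using separation_swap).
    split; [split; auto |]. intro Pz. apply Dz, HXD; auto. }
  assert (HCP : subset C P).
  { intros x Cx. destruct (classic (D x)) as [Dx | Dx].
    - apply separator_in_P; auto.
    - apply NNPP. intro Px.
      assert (Wx : W x) by (split; [split |]; auto).
      destruct (connected_closed_set W x Hconn Wx Wclosed b) as [[_ Dnb] _].
      contradiction. }
  split; [exact HCP |]. intros x Qx. apply NNPP. intro Dx.
  assert (Cx : C x) by (destruct HCD as [Hcov _]; destruct (Hcov x); tauto).
  apply Dx, HXD; auto.
Qed.

Lemma tight_separation_above :
  (exists K, tight_component V adj (fun x => P x /\ Q x) K /\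
             subset K (fun x => Q x /\ ~ P x)) ->
  sep_le V C D P Q.
Proof.
  intros [K [[Hcomp HN] HKQ]].
  assert (Hdisj : forall x, K x -> ~ (C x /\ D x))
    by (intros x Kx [Cx Dx]; apply (proj2 (HKQ x Kx)), separator_in_P; auto).
  destruct (component_one_side _ K C D HCD Hcomp Hdisj) as [HKC | HKD].
  - exfalso. destruct Hcomp as [v0 [Xv0 HK]].
    apply (tight_component_not_in_C K v0 HN HKQ HKC).
    apply HK. constructor. exact Xv0.
  - exact (tight_component_in_D_forces_le K HN HKD).
Qed.

End TightSide.
End Separations.

Theorem mainTheorem10 (V : Type) (adj : V -> V -> Prop)
  (Hsimple : simple_graph V adj)
  (Hconn : connected_graph V adj)
  (Hlf : locally_finite V adj)
  (As Bs : nat -> vset V)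
  (Hsep : forall i, is_separation V adj (As i) (Bs i))
  (Htight : forall i, tight_sep V adj (As i) (Bs i))
  (Hincr : forall i j, i < j -> sep_lt V (As i) (Bs i) (As j) (Bs j))
  (C D : vset V)
  (HCD : is_separation V adj C D)
  (HCDfin : sep_order_finite V C D) :
  let A := fun x => exists i, As i x in
  let B := fun x => forall i, Bs i x in
  (exists x, B x) ->
  sep_le V C D A B ->
  exists I, forall i, I <= i -> sep_le V C D (As i) (Bs i).
Proof.
  intros A B [b Hb] [HCA HDB].
  destruct Hsimple as [Hsym _].
  pose proof (increasing_chain_monotone V As Bs Hincr) as Hmono.
  assert (Hfin : finite_set (fun v => C v /\ closed_nbhd V adj (fun x => C x /\ D x) v)).
  { destruct (closed_nbhd_finite V adj _ Hlf HCDfin) as [l Hl].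
    exists l. intros v [_ Hv]. auto. }
  destruct (finite_eventually_covered V As _ (fun i j Hij => proj1 (Hmono i j Hij)) Hfin)
    as [I HI].
  { intros v [Cv _]. apply HCA, Cv. }
  assert (HleI : sep_le V C D (As I) (Bs I)).
  { apply (tight_separation_above V adj Hsym (As I) (Bs I) C D Hconn (Hsep I) HCD)
      with (b := b).
    - intros v Cv Hv. apply HI. split; assumption.
    - apply Hb.
    - apply HDB, Hb.
    - exact (proj2 (Htight I)). }
  exists I. intros i Hi. exact (sep_le_trans V _ _ _ _ _ _ HleI (Hmono I i Hi)).
Qed.
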